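(* Let $n\ge1$ and let $\Pi\subseteq\mathfrak{D}_n$ be invariant under the CMFS-action, i.e. $\tau^c_S(\sigma)\in\Pi$ for all $\sigma\in\Pi$ and all $S\subseteq[n]$. Let $A^{(\mathsf{cyc},\mathsf{exc})}(\Pi;w,t)=\sum_{\sigma\in\Pi}w^{\mathsf{cyc}\,\sigma}t^{\mathsf{exc}\,\sigma}$. Then $$A^{(\mathsf{cyc},\mathsf{exc})}(\Pi;w,t)=\left(\frac{1+xt}{1+x}\right)^{n}P^{(\mathsf{cyc},\mathsf{cpk},\mathsf{exc})}\left(\Pi;w,\frac{(1+x)^{2}t}{(x+t)(1+xt)},\frac{x+t}{1+xt}\right),$$ equivalently, $$P^{(\mathsf{cyc},\mathsf{cpk},\mathsf{exc})}(\Pi;w,x,t)=\left(\frac{1+u}{1+uv}\right)^{n}A^{(\mathsf{cyc},\mathsf{exc})}(\Pi;w,v),$$ where $u=\frac{1+t^{2}-2xt-(1-t)\sqrt{(1+t)^{2}-4xt}}{2(1-x)t}$ and $v=\frac{(1+t)^{2}-2xt-(1+t)\sqrt{(1+t)^{2}-4xt}}{2xt}$.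
   Context: $\mathfrak{D}_n$ is the set of derangements of $[n]$. $P^{(\mathsf{stat}_1,\ldots,\mathsf{stat}_m)}(\Omega;t_1,\ldots,t_m)=\sum_{\sigma\in\Omega}\prod_jt_j^{\mathsf{stat}_j\sigma}$; $\mathsf{cyc}$ = number of cycles, $\mathsf{exc}\,\sigma=\#\{i:\sigma(i)>i\}$, $\mathsf{cpk}\,\sigma=\#\{x:\sigma^{-1}(x)<x>\sigma(x)\}$. Modified Foata–Strehl action: for a word $\rho$ of a permutation of $[n]$ with convention $\rho(0)=0,\rho(n+1)=\infty$ and $x\in[n]$, write $\rho=w_1w_2xw_3w_4$ where $w_2$ (resp. $w_3$) is the maximal contiguous factor immediately left (resp. right) of $x$ all of whose letters are smaller than $x$; $\varphi_x(\rho)=w_1w_3xw_2w_4$; $\varphi'_x(\rho)=\rho$ if $x$ is a peak of $\rho$ (i.e. its neighbors, with the convention, are both smaller) and $\varphi'_x(\rho)=\varphi_x(\rho)$ otherwise. For $\sigma\in\mathfrak{S}_n$, write each cycle starting with its largest element, order the cycles increasingly by their largest elements, and erase parentheses to get the word $\iota(\sigma)$ ($\iota$ is a bijection of $\mathfrak{S}_n$). For $\sigma\in\mathfrak{D}_n$, $\tau^c_x(\sigma)=\iota^{-1}(\varphi'_x(\iota(\sigma)))$, and for $S\subseteq[n]$, $\tau^c_S=\prod_{x\in S}\tau^c_x$ (these commuting involutions of $\mathfrak{D}_n$ define the CMFS-action of $\mathbb{Z}_2^n$). *)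

(* Permutations of [n] are {perm 'I_n}; the ordinal i : 'I_n
   stands for the integer i+1 of [n]. Words are seq nat with letters in 1..n. *)
From mathcomp Require Import all_boot all_order all_algebra all_fingroup.
Set Implicit Arguments. Unset Strict Implicit. Unset Printing Implicit Defensive.

Definition derangement n (s : {perm 'I_n}) : bool := [forall i, s i != i].

Definition cyc n (s : {perm 'I_n}) : nat := #|porbits s|.
Definition exc n (s : {perm 'I_n}) : nat := #|[set i : 'I_n | i < s i]|.
Definition cpk n (s : {perm 'I_n}) : nat :=
  #|[set i : 'I_n | ((s^-1)%g i < i) && (s i < i)]|.

(* iota(s): each cycle written starting with its largest element, cycles in
   increasing order of their largest elements, parentheses erased. *)
Definition iota_word n (s : {perm 'I_n}) : seq nat :=
  flatten [seq [seq (val j).+1 | j <- fingraph.orbit (fun k : 'I_n => s k) i]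
          | i : 'I_n <- enum 'I_n & all (fun j : 'I_n => (j <= i)%N) (fingraph.orbit (fun k : 'I_n => s k) i)].

(* modified Foata--Strehl action phi'_x on a word rho of a permutation of [n],
   with the conventions rho(0) = 0 and rho(n+1) = infinity. *)
Definition fs_split (x : nat) (rho : seq nat) :=
  let i := index x rho in
  let left := take i rho in
  let right := drop i.+1 rho in
  let k := find (fun y => x < y) (rev left) in
  let w2 := rev (take k (rev left)) in
  let w1 := rev (drop k (rev left)) in
  let m := find (fun y => x < y) right in
  let w3 := take m right in
  let w4 := drop m right in
  (w1, w2, w3, w4).

Definition phi (x : nat) (rho : seq nat) : seq nat :=
  let: (w1, w2, w3, w4) := fs_split x rho in w1 ++ w3 ++ x :: w2 ++ w4.

Definition is_peak (x : nat) (rho : seq nat) : bool :=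
  let i := index x rho in
  let left := take i rho in
  let right := drop i.+1 rho in
  (last 0 left < x) && (if right is y :: _ then y < x else false).

Definition phi' (x : nat) (rho : seq nat) : seq nat :=
  if is_peak x rho then rho else phi x rho.

(* tau^c_x(s) = iota^{-1}(phi'_x(iota(s))); iota is a bijection of S_n, so
   iota^{-1} is realised as the (unique) permutation with the given word.
   Here x : 'I_n stands for the letter x+1. *)
Definition tau_c n (x : 'I_n) (s : {perm 'I_n}) : {perm 'I_n} :=
  let w := phi' (val x).+1 (iota_word s) in
  if [pick s' : {perm 'I_n} | iota_word s' == w] is Some s' then s' else s.

Definition tau_cS n (S : {set 'I_n}) (s : {perm 'I_n}) : {perm 'I_n} :=
  foldr (fun x t => tau_c x t) s (enum S).

Definition CMFS_invariant n (Pi : {set {perm 'I_n}}) : Prop :=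
  forall (S : {set 'I_n}) (s : {perm 'I_n}), s \in Pi -> tau_cS S s \in Pi.

From mathcomp Require Import all_boot all_order all_algebra all_fingroup.
From mathcomp Require Import zify ring.
Set Implicit Arguments. Unset Strict Implicit. Unset Printing Implicit Defensive.

(* Read a derangement sigma through its word iota(sigma).  Since each cycle is written
   from its maximum and the cycles come by increasing maxima, the cyclic type of a
   letter a (whether sigma^-1(a) < a, whether a < sigma(a)) is its type in the word read
   between the sentinels 0 and +oo, the cycles are the left-to-right maxima, and sigma
   can be read back off the word.  The move phi'_x exchanges the factors w2 and w3 around
   x, so it keeps the type of every other letter and the left-to-right maxima, swaps a
   double ascent at x with a double descent and fixes peaks and valleys.  Hence each
   tau^c_x is an involution of Pi preserving cyc and cpk, and pairing sigma with
   tau^c_x(sigma) whenever x is a double descent of sigma merges the weights 1 and t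
   of x into 1 + t.  Doing this for every x turns the sum of t^exc over Pi into the sum,
   over the sigma in Pi without double ascents, of t^valleys (1 + t)^ddes
   = t^cpk (1 + t)^(n - 2 cpk); after the substitution t = qY qZ, 1 + t = q (1 + Z)
   both sides of the identity have this expansion. *)

Section Assoc.
Variables (A B : eqType) (b0 : B).
Implicit Types (L : seq (A * B)) (a : A) (b : B).

Definition assoc L a : B := nth b0 (unzip2 L) (index a (unzip1 L)).

Lemma assoc_mem L a b : uniq (unzip1 L) -> (a, b) \in L -> assoc L a = b.
Proof.
rewrite /assoc; elim: L => [|[a' b'] L IH] //= /andP[a'L uL]; rewrite inE.
case/orP=> [/eqP[-> ->]|abL]; first by rewrite eqxx.
have -> /= : (a' == a) = false.
  by apply: contraNF a'L => /eqP->; apply/mapP; exists (a, b).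
exact: IH.
Qed.

Lemma mem_assoc L a : a \in unzip1 L -> (a, assoc L a) \in L.
Proof.
rewrite /assoc; elim: L => [|[a' b'] L IH] //=; rewrite inE eq_sym.
case: (a' =P a) => [-> _|_ /= aL]; first exact: mem_head.
by rewrite inE IH ?orbT.
Qed.

End Assoc.

(** * Letter types and records of words *)

Definition ltn_end (b : nat) (e : option nat) := if e is Some c then b < c else true.
Definition next_letter (u : seq nat) (e : option nat) := if u is c :: _ then Some c else e.

(* [letter_types a u e] pairs each letter b of u with (left neighbour < b, b < right
   neighbour), u being preceded by a and followed by e ([None] stands for +oo).
   (true, false) is a peak, (false, true) a valley, (true, true) a double ascent and
   (false, false) a double descent. *)
Fixpoint letter_types (a : nat) (u : seq nat) (e : option nat) :
    seq (nat * (bool * bool)) :=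
  if u is b :: u' then (b, (a < b, ltn_end b (next_letter u' e))) :: letter_types b u' e
  else [::].

Definition wtype (r : seq nat) (y : nat) : bool * bool :=
  assoc (false, false) (letter_types 0 r None) y.

Lemma letter_types_cat a u v e :
  letter_types a (u ++ v) e = letter_types a u (next_letter v e) ++ letter_types (last a u) v e.
Proof.
elim: u a => [|b u IH] a //=; rewrite IH; congr ((_, (_, _)) :: _).
by case: u {IH}.
Qed.

Lemma eq_letter_types_l a a' b u e :
  (a < b) = (a' < b) -> letter_types a (b :: u) e = letter_types a' (b :: u) e.
Proof. by move=> /= ->. Qed.

Lemma eq_letter_types_r a u e e' :
  (u != [::] -> ltn_end (last a u) e = ltn_end (last a u) e') ->
  letter_types a u e = letter_types a u e'.
Proof.
elim: u a => [|b u IH] a //= H; rewrite (IH b); last by case: u {IH} H.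
by case: u {IH} H => [|c u] /= H; rewrite ?H.
Qed.

Lemma letter_types_unzip1 a u e : unzip1 (letter_types a u e) = u.
Proof. by elim: u a => [|b u IH] a //=; rewrite IH. Qed.

Lemma wtypeE r y c : uniq r -> (y, c) \in letter_types 0 r None -> wtype r y = c.
Proof. by move=> ur; apply: assoc_mem; rewrite letter_types_unzip1. Qed.

Lemma mem_wtype r y : y \in r -> (y, wtype r y) \in letter_types 0 r None.
Proof. by move=> yr; apply: mem_assoc; rewrite letter_types_unzip1. Qed.

Fixpoint records (m : nat) (u : seq nat) : nat :=
  if u is b :: u' then (m < b) + records (maxn m b) u' else 0.

Lemma records_cat m u v : records m (u ++ v) = records m u + records (foldl maxn m u) v.
Proof. by elim: u m => [|b u IH] m //=; rewrite IH addnA. Qed.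

Lemma foldl_maxn_small M u : all (leq^~ M) u -> foldl maxn M u = M.
Proof. by elim: u => [|b u IH] //= /andP[/maxn_idPl -> /IH]. Qed.

Lemma records_small M u : all (leq^~ M) u -> records M u = 0.
Proof.
elim: u => [|b u IH] //= /andP[bM uM].
by rewrite ltnNge bM (maxn_idPl bM) IH.
Qed.

Lemma foldl_maxn_last m u : last m u <= foldl maxn m u.
Proof.
elim: u m => [|b u IH] m //=; case: u IH => [|c u] IH /=; first exact: leq_maxr.
exact: IH.
Qed.

(** * The modified Foata--Strehl move *)

(* The factorisation rho = w1 w2 X w3 w4 used by phi_X; the default X.+1 of [last] and
   [head] makes the conditions on w1 and w4 hold when they are empty. *)
Definition fs_factors X (w1 w2 w3 w4 : seq nat) : bool :=
  [&& X \notin w1, all (ltn^~ X) w2, all (ltn^~ X) w3,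
      X < last X.+1 w1 & X < head X.+1 w4].

Lemma fs_factorsC X w1 w2 w3 w4 : fs_factors X w1 w2 w3 w4 = fs_factors X w1 w3 w2 w4.
Proof. by rewrite /fs_factors; case: (all _ w2); case: (all _ w3); rewrite ?andbF. Qed.

Lemma fs_split_factors X w1 w2 w3 w4 : fs_factors X w1 w2 w3 w4 ->
  fs_split X (w1 ++ w2 ++ X :: w3 ++ w4) = (w1, w2, w3, w4).
Proof.
case/and5P=> X_notin_w1 w2_lt w3_lt w1_gt w4_gt.
have noGt w : all (ltn^~ X) w -> ~~ has (ltn X) w.
  by move=> /allP wX; apply/hasPn => y /wX yX; rewrite -leqNgt ltnW.
have X_notin_w2 : X \notin w2 by apply/negP => /(allP w2_lt) /=; rewrite ltnn.
have iX : index X (w1 ++ w2 ++ X :: w3 ++ w4) = size (w1 ++ w2).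
  by rewrite catA index_cat mem_cat (negbTE X_notin_w1) (negbTE X_notin_w2) /= eqxx addn0.
rewrite /fs_split iX catA take_size_cat // drop_cat ltnNge leqnSn /= subSnn /=.
rewrite rev_cat find_cat has_rev (negbTE (noGt _ w2_lt)).
have -> : find (ltn X) (rev w1) = 0.
  by case/lastP: w1 {X_notin_w1 iX} w1_gt => [//|w b]; rewrite last_rcons rev_rcons /= => ->.
rewrite addn0 size_rev take_size_cat ?size_rev // drop_size_cat ?size_rev //.
rewrite !revK drop0 find_cat (negbTE (noGt _ w3_lt)).
have -> : find (ltn X) w4 = 0 by case: w4 {iX} w4_gt => //= c w ->.
by rewrite addn0 take_size_cat // drop_size_cat.
Qed.

Lemma hasNtake_find (T : Type) (p : pred T) s : ~~ has p (take (find p s) s).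
Proof.
have [ps|nps] := boolP (has p s); first by rewrite has_take // ltnn.
by rewrite hasNfind // take_size.
Qed.

Lemma all_ltn_take_find X s : X \notin s -> all (ltn^~ X) (take (find (ltn X) s) s).
Proof.
move=> Xs; apply/allP => y yt /=; rewrite ltn_neqAle.
have -> : y != X by apply: contraNneq Xs => <-; apply: mem_take yt.
by rewrite leqNgt (hasPn (hasNtake_find _ _) y yt).
Qed.

Lemma head_drop_find X s : X < head X.+1 (drop (find (ltn X) s) s).
Proof.
have [ps|nps] := boolP (has (ltn X) s); last by rewrite hasNfind // drop_size.
by rewrite (drop_nth 0) -?has_find //=; apply: nth_find.
Qed.

Lemma fs_factors_exist X r : uniq r -> X \in r ->
  exists w1 w2 w3 w4, r = w1 ++ w2 ++ X :: w3 ++ w4 /\ fs_factors X w1 w2 w3 w4.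
Proof.
move=> ur Xr; set i := index X r.
have Hr : r = take i r ++ X :: drop i.+1 r.
  by rewrite -{1}(cat_take_drop i r) (drop_nth 0) ?index_mem // nth_index.
move: ur; rewrite Hr cat_uniq /= => /and4P [_ HL XR _].
have XL : X \notin take i r by apply: contra HL => ->.
set L := take i r in Hr XL *; set R := drop i.+1 r in Hr XR *.
set k := find (ltn X) (rev L); set m := find (ltn X) R.
exists (rev (drop k (rev L))), (rev (take k (rev L))), (take m R), (drop m R); split.
  by rewrite catA -rev_cat cat_take_drop revK cat_take_drop.
apply/and5P; split.
- by apply: contra XL; rewrite mem_rev => /mem_drop; rewrite mem_rev.
- by rewrite all_rev all_ltn_take_find // mem_rev.
- exact: all_ltn_take_find.
- by have := head_drop_find X (rev L); case: (drop k _) => //= b w; rewrite rev_cons last_rcons.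
- exact: head_drop_find.
Qed.

Section Factors.
Variables (X : nat) (w1 w2 w3 w4 : seq nat).
Hypotheses (fs : fs_factors X w1 w2 w3 w4) (w1_neq0 : w1 != [::]).

Let r := w1 ++ w2 ++ X :: w3 ++ w4.

Let X_notin_w1 : X \notin w1. Proof. by case/and5P: fs. Qed.
Let w2_lt : all (ltn^~ X) w2. Proof. by case/and5P: fs. Qed.
Let w3_lt : all (ltn^~ X) w3. Proof. by case/and5P: fs. Qed.
Let w4_gt : X < head X.+1 w4. Proof. by case/and5P: fs. Qed.
Let w1_gt : X < last 0 w1.
Proof. by case/and5P: fs => _ _ _; case/lastP: w1 w1_neq0 => // w b; rewrite !last_rcons. Qed.

Let index_r : index X r = size (w1 ++ w2).
Proof.
have X_notin_w2 : X \notin w2 by apply/negP => /(allP w2_lt) /=; rewrite ltnn.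
by rewrite /r catA index_cat mem_cat (negbTE X_notin_w1) (negbTE X_notin_w2) /= eqxx addn0.
Qed.

Lemma take_index_factors : take (index X r) r = w1 ++ w2.
Proof. by rewrite index_r /r catA take_size_cat. Qed.

Let drop_r : drop (index X r).+1 r = w3 ++ w4.
Proof. by rewrite index_r /r catA drop_cat ltnNge leqnSn /= subSnn /= drop0. Qed.

Let left_ascent : (last (last 0 w1) w2 < X) = (w2 != [::]).
Proof.
move: w2_lt; case/lastP: w2 => [|w b] /=; first by rewrite ltnNge ltnW.
by rewrite last_rcons all_rcons => /andP[-> _]; case: w.
Qed.

Let right_ascent : ltn_end X (next_letter (w3 ++ w4) None) = (w3 == [::]).
Proof.
move: w3_lt; case: w3 => [|b w] /=; last by move=> /andP[bX _]; rewrite ltnNge ltnW.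
by case: w4 w4_gt.
Qed.

Lemma is_peak_factors : is_peak X r = (w2 != [::]) && (w3 != [::]).
Proof.
rewrite /is_peak take_index_factors drop_r last_cat left_ascent; congr (_ && _).
move: w3_lt; case: w3 => [|b w] /=; last by move=> /andP[-> _].
by case: w4 w4_gt => //= c w Xc; rewrite ltnNge (ltnW Xc).
Qed.

Lemma letter_types_factors : letter_types 0 r None =
  letter_types 0 w1 (Some X) ++ letter_types X w2 (Some X) ++
  (X, (w2 != [::], w3 == [::])) :: letter_types X w3 (Some X) ++ letter_types X w4 None.
Proof.
rewrite /r letter_types_cat; congr (_ ++ _).
  apply: eq_letter_types_r => _; move: w2_lt; case: w2 => [|b w] /=.
    by rewrite ltnNge (ltnW w1_gt).
  move=> /andP[bX _]; rewrite ltnNge ltnNge (ltnW w1_gt).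
  by rewrite ltnW // (ltn_trans bX w1_gt).
rewrite letter_types_cat; congr (_ ++ _).
  move: w2_lt; case: w2 => [|b w] //= /andP[bX _]; apply: eq_letter_types_l.
  by rewrite !ltnNge (ltnW bX) (ltnW (ltn_trans bX w1_gt)).
rewrite /= left_ascent right_ascent letter_types_cat; congr (_ :: (_ ++ _)).
  apply: eq_letter_types_r; move: w3_lt; case/lastP: w3 => [|w b] //=.
  rewrite last_rcons all_rcons => /andP[bX _] _.
  by case: w4 w4_gt => //= c w' Xc; rewrite bX (ltn_trans bX Xc).
case: w4 w4_gt => [|c w] //= Xc; congr ((_, (_, _)) :: _).
have : last X w3 <= X.
  by move: w3_lt; case/lastP: w3 => [|w' b] //=; rewrite last_rcons all_rcons => /andP[/ltnW].
by move=> h; rewrite Xc (leq_ltn_trans h Xc).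
Qed.

Lemma wtype_factors : uniq r -> wtype r X = (w2 != [::], w3 == [::]).
Proof.
by move=> ur; apply: wtypeE => //; rewrite letter_types_factors !mem_cat mem_head !orbT.
Qed.

Lemma records_factors : records 0 r = records 0 w1 + records (foldl maxn 0 w1) w4.
Proof.
rewrite /r records_cat -cat_cons catA records_cat.
have hM : X < foldl maxn 0 w1 := leq_trans w1_gt (foldl_maxn_last 0 w1).
have small : all (leq^~ (foldl maxn 0 w1)) (w2 ++ X :: w3).
  rewrite all_cat /= ltnW //=; apply/andP; split; [move: w2_lt|move: w3_lt];
  by apply: sub_all => y /= yX; exact: ltnW (ltn_trans yX hM).
by rewrite (records_small small) (foldl_maxn_small small).
Qed.

End Factors.

Lemma phi_factors X w1 w2 w3 w4 : fs_factors X w1 w2 w3 w4 ->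
  phi X (w1 ++ w2 ++ X :: w3 ++ w4) = w1 ++ w3 ++ X :: w2 ++ w4.
Proof. by move=> fs; rewrite /phi fs_split_factors. Qed.

Lemma is_peak_wtype X r : uniq r -> X \in r -> is_peak X r = (wtype r X == (true, false)).
Proof.
move=> ur Xr; set i := index X r.
have Hr : r = take i r ++ X :: drop i.+1 r.
  by rewrite -{1}(cat_take_drop i r) (drop_nth 0) ?index_mem // nth_index.
have XR : X \notin drop i.+1 r by move: ur; rewrite {1}Hr cat_uniq /= => /and4P[_ _ ? _].
have -> : wtype r X = (last 0 (take i r) < X, ltn_end X (next_letter (drop i.+1 r) None)).
  by apply: wtypeE => //; rewrite {3}Hr letter_types_cat /= mem_cat mem_head orbT.
rewrite /is_peak -/i; case: (drop i.+1 r) XR => [|y R] /=; first by case: (_ < X).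
rewrite inE negb_or eq_sym => /andP[yX _].
have -> : (y < X) = ~~ (X < y) by rewrite ltnNge leq_eqVlt eq_sym (negbTE yX).
by case: (_ < X); case: (X < y).
Qed.

(* Exchanging w2 and w3 exchanges and negates the two comparisons of X with its
   neighbours. *)
Definition flip_type (c : bool * bool) := (~~ c.2, ~~ c.1).

Variant phi'_spec X r : seq nat -> Prop :=
| Phi'Peak of is_peak X r : phi'_spec X r r
| Phi'Swap w1 w2 w3 w4 of r = w1 ++ w2 ++ X :: w3 ++ w4 & fs_factors X w1 w2 w3 w4
    & w1 != [::] & (w2 == [::]) || (w3 == [::]) :
    phi'_spec X r (w1 ++ w3 ++ X :: w2 ++ w4).

Lemma phi'P X r : uniq r -> X \in r -> has (ltn X) (take (index X r) r) ->
  phi'_spec X r (phi' X r).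
Proof.
move=> ur Xr; have [w1 [w2 [w3 [w4 [-> fs]]]]] := fs_factors_exist ur Xr.
rewrite take_index_factors // has_cat => hasX.
have w1_neq0 : w1 != [::].
  apply: contraTneq hasX => ->; have /and5P[_ H2 _ _ _] := fs.
  by rewrite /= -all_predC; apply: sub_all H2 => y /= yX; rewrite -leqNgt ltnW.
rewrite /phi'; case: ifP => [pk|]; first exact: Phi'Peak.
rewrite is_peak_factors // phi_factors // => /negbT; rewrite negb_and !negbK => npk.
exact: Phi'Swap.
Qed.

Lemma perm_eq_swap (X : nat) (w1 w2 w3 w4 : seq nat) :
  perm_eq (w1 ++ w3 ++ X :: w2 ++ w4) (w1 ++ w2 ++ X :: w3 ++ w4).
Proof. by apply/seq.permP => p; rewrite !count_cat /= !count_cat; lia. Qed.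

Lemma perm_eq_phi' X r : uniq r -> X \in r -> perm_eq (phi' X r) r.
Proof.
move=> ur Xr; rewrite /phi'; case: ifP => _ //.
have [w1 [w2 [w3 [w4 [-> fs]]]]] := fs_factors_exist ur Xr.
by rewrite phi_factors // perm_eq_swap.
Qed.

Section PhiPrime.
Variables (X : nat) (r : seq nat).
Hypotheses (ur : uniq r) (Xr : X \in r) (hasX : has (ltn X) (take (index X r) r)).

Lemma phi'K : phi' X (phi' X r) = r.
Proof.
case: (phi'P ur Xr hasX) => [pk|w1 w2 w3 w4 -> fs w1_neq0 npk]; first by rewrite /phi' pk.
have npk' : ~~ ((w3 != [::]) && (w2 != [::])) by rewrite negb_and !negbK orbC.
rewrite fs_factorsC in fs.
by rewrite /phi' is_peak_factors // (negbTE npk') phi_factors.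
Qed.

Lemma wtype_phi' y : y \in r -> y != X -> wtype (phi' X r) y = wtype r y.
Proof.
move=> yr yX; case: (phi'P ur Xr hasX) => // w1 w2 w3 w4 Hr fs w1_neq0 _.
have ur' : uniq (w1 ++ w3 ++ X :: w2 ++ w4) by rewrite (perm_uniq (perm_eq_swap _ _ _ _ _)) -Hr.
have := mem_wtype yr; move: (wtype r y) => c; rewrite Hr => yc.
have fs' : fs_factors X w1 w3 w2 w4 by rewrite -fs_factorsC.
apply: wtypeE ur' _; move: yc.
rewrite letter_types_factors // letter_types_factors // !mem_cat !inE.
have neqX d : ((y, c) == (X, d)) = false by apply/negbTE; apply: contra yX => /eqP[->].
by rewrite !neqX /= !mem_cat => /or4P[] ->; rewrite ?orbT.
Qed.

Lemma wtype_phi'_X : wtype (phi' X r) X = flip_type (wtype r X).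
Proof.
case: (phi'P ur Xr hasX) => [pk|w1 w2 w3 w4 Hr fs w1_neq0 _].
  by move: pk; rewrite is_peak_wtype // => /eqP->.
have fs' : fs_factors X w1 w3 w2 w4 by rewrite -fs_factorsC.
have ur' : uniq (w1 ++ w3 ++ X :: w2 ++ w4) by rewrite (perm_uniq (perm_eq_swap _ _ _ _ _)) -Hr.
by rewrite Hr !wtype_factors -?Hr // /flip_type /= negbK.
Qed.

Lemma records_phi' : records 0 (phi' X r) = records 0 r.
Proof.
case: (phi'P ur Xr hasX) => // w1 w2 w3 w4 -> fs w1_neq0 _.
have fs' : fs_factors X w1 w3 w2 w4 by rewrite -fs_factorsC.
by rewrite !records_factors.
Qed.

End PhiPrime.

(** * The word of a permutation *)

(* In [iota_word s] the image under s of a letter is the next letter if this one is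
   smaller than the current left-to-right maximum, and that maximum otherwise. *)
Fixpoint word_succ (m : nat) (u : seq nat) (e : option nat) : seq (nat * nat) :=
  if u is b :: u' then
    (b, if next_letter u' e is Some c then if c < maxn m b then c else maxn m b
        else maxn m b) :: word_succ (maxn m b) u' e
  else [::].

Lemma word_succ_cat m u v e :
  word_succ m (u ++ v) e = word_succ m u (next_letter v e) ++ word_succ (foldl maxn m u) v e.
Proof.
elim: u m => [|b u IH] m //=; rewrite IH; congr ((_, _) :: _).
by case: u {IH}.
Qed.

Lemma word_succ_unzip1 m u e : unzip1 (word_succ m u e) = u.
Proof. by elim: u m => [|b u IH] m //=; rewrite IH. Qed.

Section IotaWord.
Variable n : nat.
Implicit Types (s : {perm 'I_n}) (i j a : 'I_n).

Definition porbit_seq s i := fingraph.orbit (fun k : 'I_n => s k) i.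

Definition cycle_maxima s :=
  [seq i : 'I_n <- enum 'I_n | all (fun j : 'I_n => j <= i) (porbit_seq s i)].

Definition cycle_block s i := [seq (val j).+1 | j <- porbit_seq s i].

Definition ctype s a := ((s^-1)%g a < a, a < s a).

Lemma iota_wordE s : iota_word s = flatten [seq cycle_block s i | i <- cycle_maxima s].
Proof. by []. Qed.

Lemma mem_porbit_seq s i j : (j \in porbit_seq s i) = (j \in porbit s i).
Proof.
rewrite -fconnect_orbit; apply/idP/porbitP => [|[k ->]]; last first.
  by rewrite permX; apply: fconnect_iter.
by move/iter_findex <-; exists (findex (fun k : 'I_n => s k) i j); rewrite permX.
Qed.

Lemma porbit_seq_cons s i : exists v, porbit_seq s i = i :: v /\
  path (frel (fun k : 'I_n => s k)) i v /\ s (last i v) = i.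
Proof.
have := cycle_orbit (@perm_inj _ s) i; rewrite -/(porbit_seq s i).
have -> : porbit_seq s i = i :: traject (fun k : 'I_n => s k) (s i)
    (fingraph.order (fun k : 'I_n => s k) i).-1.
  by rewrite /porbit_seq /fingraph.orbit -orderSpred.
set v := traject _ _ _ => /=; rewrite rcons_path => /andP[pv /eqP lv].
by exists v.
Qed.

Lemma mem_cycle_maxima s i :
  (i \in cycle_maxima s) = [forall (j | j \in porbit s i), j <= i].
Proof.
rewrite mem_filter mem_enum andbT; apply/allP/forall_inP => le_i j.
  by rewrite -mem_porbit_seq; apply: le_i.
by rewrite mem_porbit_seq; apply: le_i.
Qed.

Lemma cycle_maxima_le s i j : i \in cycle_maxima s -> j \in porbit s i -> j <= i.
Proof. by rewrite mem_cycle_maxima => /forall_inP; apply. Qed.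

Lemma cycle_maxima_cover s a : exists2 i, i \in cycle_maxima s & a \in porbit s i.
Proof.
case: (@arg_maxnP _ a (mem (porbit s a)) val (porbit_id s a)) => m ma m_max.
exists m; last by rewrite porbit_sym.
rewrite mem_cycle_maxima; apply/forall_inP => j.
by rewrite (eqP (etrans (eq_porbit_mem s m a) ma)); apply: m_max.
Qed.

Lemma cycle_maxima_inj s i i' a : i \in cycle_maxima s -> i' \in cycle_maxima s ->
  a \in porbit s i -> a \in porbit s i' -> i = i'.
Proof.
move=> iC i'C ai ai'; have e : porbit s i = porbit s i'.
  by rewrite -(eqP (etrans (eq_porbit_mem _ _ _) ai)) (eqP (etrans (eq_porbit_mem _ _ _) ai')).
apply/val_inj/eqP; rewrite eqn_leq (cycle_maxima_le iC) ?e ?porbit_id //.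
by rewrite (cycle_maxima_le i'C) -?e ?porbit_id.
Qed.

Lemma cycle_maxima_uniq s : uniq (cycle_maxima s).
Proof. by rewrite filter_uniq // enum_uniq. Qed.

Lemma cycle_maxima_sorted s : sorted (fun i j : 'I_n => i < j) (cycle_maxima s).
Proof.
apply: sorted_filter; first by move=> x y z; apply: ltn_trans.
by have := iota_ltn_sorted 0 n; rewrite -val_enum_ord sorted_map.
Qed.

Lemma perm_eq_cycle_maxima_orbits s :
  perm_eq (flatten [seq porbit_seq s i | i <- cycle_maxima s]) (enum 'I_n).
Proof.
apply: uniq_perm; last 2 first.
- exact: enum_uniq.
- move=> a; rewrite mem_enum; apply/flattenP.
  have [i iC ai] := cycle_maxima_cover s a.
  by exists (porbit_seq s i); [apply: map_f | rewrite mem_porbit_seq].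
have flat_uniq hs : uniq hs -> {subset hs <= cycle_maxima s} ->
    uniq (flatten [seq porbit_seq s i | i <- hs]).
  elim: hs => [|i hs IH] //= /andP[ihs uhs] sub.
  rewrite cat_uniq orbit_uniq IH ?andbT //; last by move=> j jh; apply: sub; rewrite inE jh orbT.
  apply/hasPn => a /flattenP [l /mapP [i' i'h ->] ai']; apply/negP => ai.
  case/negP: ihs; rewrite mem_porbit_seq in ai; rewrite mem_porbit_seq in ai'.
  by rewrite (cycle_maxima_inj _ _ ai ai') ?sub ?inE ?eqxx ?i'h ?orbT.
exact: flat_uniq (cycle_maxima_uniq s) (fun _ h => h).
Qed.

Lemma iota_word_orbits s :
  iota_word s = [seq (val j).+1 | j <- flatten [seq porbit_seq s i | i <- cycle_maxima s]].
Proof. by rewrite map_flatten -map_comp. Qed.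

Lemma iota_word_perm s : perm_eq (iota_word s) [seq (val j).+1 | j <- enum 'I_n].
Proof. by rewrite iota_word_orbits; apply/perm_map/perm_eq_cycle_maxima_orbits. Qed.

Lemma succ_ord_inj : injective (fun j : 'I_n => (val j).+1).
Proof. by move=> x y [] /val_inj. Qed.

Lemma iota_word_uniq s : uniq (iota_word s).
Proof. by rewrite (perm_uniq (iota_word_perm s)) (map_inj_uniq succ_ord_inj) enum_uniq. Qed.

Lemma mem_iota_word s a : (val a).+1 \in iota_word s.
Proof. by rewrite (perm_mem (iota_word_perm s)) (mem_map succ_ord_inj) mem_enum. Qed.

Lemma porbit_seq_tail s i v : porbit_seq s i = i :: v -> i \in cycle_maxima s ->
  all (fun j : 'I_n => j < i) v.
Proof.
move=> ov iC; have := orbit_uniq (fun k : 'I_n => s k) i; rewrite -/(porbit_seq s i) ov.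
case/andP=> iv _; apply/allP => j jv; rewrite ltn_neqAle (cycle_maxima_le iC); last first.
  by rewrite -mem_porbit_seq ov inE jv orbT.
by rewrite andbT; apply: contraNneq iv => /val_inj <-.
Qed.

Lemma cycle_block_cons s i : i \in cycle_maxima s ->
  exists2 w, cycle_block s i = (val i).+1 :: w & all (leq^~ (val i)) w.
Proof.
move=> iC; have [v [ov _]] := porbit_seq_cons s i.
exists [seq (val j).+1 | j <- v]; first by rewrite /cycle_block ov.
by rewrite all_map; apply: sub_all (porbit_seq_tail ov iC).
Qed.

Lemma foldl_maxn_block s i m : i \in cycle_maxima s -> m <= (val i).+1 ->
  foldl maxn m (cycle_block s i) = (val i).+1.
Proof.
move=> iC mi; have [w -> wi] := cycle_block_cons iC.
by rewrite /= (maxn_idPr mi) foldl_maxn_small //; apply: sub_all wi => b /leqW.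
Qed.

Lemma records_block s i m : i \in cycle_maxima s -> m <= val i ->
  records m (cycle_block s i) = 1.
Proof.
move=> iC mi; have [w -> wi] := cycle_block_cons iC.
by rewrite /= ltnS mi (maxn_idPr (leqW mi)) records_small //; apply: sub_all wi => b /leqW.
Qed.

Lemma last_block s i m : i \in cycle_maxima s -> last m (cycle_block s i) <= (val i).+1.
Proof.
move=> iC; have [w -> wi] := cycle_block_cons iC.
by case/lastP: w wi => [|w b] //=; rewrite last_rcons all_rcons => /andP[/leqW].
Qed.

Lemma mem_porbit_perm s i : s i \in porbit s i.
Proof. by have := mem_porbit s 1 i; rewrite expg1. Qed.

Lemma mem_porbit_invperm s i : (s^-1)%g i \in porbit s i.
Proof. by rewrite -porbitV; have := mem_porbit s^-1 1 i; rewrite expg1. Qed.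

Lemma ctype_cycle_max s i : derangement s -> i \in cycle_maxima s -> ctype s i = (true, false).
Proof.
move=> ds iC; rewrite /ctype ltn_neqAle (cycle_maxima_le iC (mem_porbit_invperm s i)).
rewrite ltnNge (cycle_maxima_le iC (mem_porbit_perm s i)) andbT.
by congr (_, _); apply: contra (forallP ds i) => /eqP/val_inj {1}<-; rewrite permKV.
Qed.

Lemma letter_types_path s (v : seq 'I_n) (b0 : 'I_n) (a : nat) e :
  path (frel (fun k : 'I_n => s k)) b0 v ->
  (a < (val b0).+1) = ((s^-1)%g b0 < b0) ->
  ltn_end (val (last b0 v)).+1 e = (last b0 v < s (last b0 v)) ->
  letter_types a [seq (val j).+1 | j <- b0 :: v] e =
  [seq ((val j).+1, ctype s j) | j <- b0 :: v].
Proof.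
elim: v b0 a => [|c v IH] b0 a; first by move=> _ /= -> ->.
move=> /= /andP[/eqP sb0 pv] h1 h2; have /= -> := IH c (val b0).+1 pv _ h2.
  by rewrite /ctype h1 -sb0 ltnS.
by rewrite -sb0 permK ltnS.
Qed.

Lemma letter_types_block s i (a : nat) e : derangement s -> i \in cycle_maxima s ->
  a <= val i -> ltn_end (val i).+1 e ->
  letter_types a (cycle_block s i) e = [seq ((val j).+1, ctype s j) | j <- porbit_seq s i].
Proof.
move=> ds iC ai ie; have [v [ov [pv lv]]] := porbit_seq_cons s i.
have [si_lt _] := ctype_cycle_max ds iC.
rewrite /cycle_block ov; apply: letter_types_path => //; first by rewrite ltnS ai si_lt.
have lo : last i v \in porbit s i by rewrite -mem_porbit_seq ov mem_last.
have l_neq : last i v != i by apply: contra (forallP ds (last i v)) => /eqP e1; rewrite lv e1.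
have -> : last i v < s (last i v) by rewrite lv ltn_neqAle l_neq (cycle_maxima_le iC lo).
by case: e ie => //= c ic; apply: leq_ltn_trans ic; rewrite ltnS (cycle_maxima_le iC lo).
Qed.

Lemma word_succ_path s (v : seq 'I_n) (b0 : 'I_n) m M e :
  path (frel (fun k : 'I_n => s k)) b0 v ->
  all (fun j : 'I_n => (val j).+1 < M) v -> (val b0).+1 <= M ->
  maxn m (val b0).+1 = M -> (val (s (last b0 v))).+1 = M ->
  (if e is Some c then M <= c else true) ->
  word_succ m [seq (val j).+1 | j <- b0 :: v] e =
  [seq ((val j).+1, (val (s j)).+1) | j <- b0 :: v].
Proof.
elim: v b0 m => [|c v IH] b0 m /=.
  by move=> _ _ _ -> <-; case: e => // c cM; rewrite ltnNge cM.
move=> /andP[/eqP sb0 pv] /andP[cM aM] bM mM lM ce.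
have /= IH' := IH c M pv aM (ltnW cM) (maxn_idPl (ltnW cM)) lM ce.
by rewrite mM IH' cM sb0.
Qed.

Lemma word_succ_block s i m e : i \in cycle_maxima s -> m <= (val i).+1 ->
  (if e is Some c then (val i).+1 <= c else true) ->
  word_succ m (cycle_block s i) e = [seq ((val j).+1, (val (s j)).+1) | j <- porbit_seq s i].
Proof.
move=> iC mi ie; have [v [ov [pv lv]]] := porbit_seq_cons s i.
rewrite /cycle_block ov; apply: (word_succ_path (M := (val i).+1)) => //.
- by apply: sub_all (porbit_seq_tail ov iC) => j /=; rewrite ltnS.
- exact/maxn_idPr.
- by rewrite lv.
Qed.

Definition increasing_maxima s m (hs : seq 'I_n) :=
  sorted (fun i j : 'I_n => i < j) hs && all (fun i => (i \in cycle_maxima s) && (m <= i)) hs.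

Lemma increasing_maxima_cons s m i hs : increasing_maxima s m (i :: hs) ->
  [/\ i \in cycle_maxima s, m <= i & increasing_maxima s i.+1 hs].
Proof.
case/andP=> so /= /andP[/andP[iC mi] hs_ok]; split=> //; apply/andP; split.
  exact: path_sorted so.
have /allP i_lt : all (fun j : 'I_n => i < j) hs.
  by apply: order_path_min so => x y z; apply: ltn_trans.
by apply/allP => j jh; rewrite (i_lt j jh) andbT; have /andP[] := allP hs_ok j jh.
Qed.

Lemma next_letter_blocks s m hs : increasing_maxima s m hs ->
  next_letter (flatten [seq cycle_block s i | i <- hs]) None =
  if hs is i :: _ then Some (val i).+1 else None.
Proof.
case: hs => [|i hs] //= /increasing_maxima_cons[iC _ _].
by have [w -> _] := cycle_block_cons iC.
Qed.

Lemma letter_types_blocks s m hs (a : nat) :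
  derangement s -> increasing_maxima s m hs -> a <= m ->
  letter_types a (flatten [seq cycle_block s i | i <- hs]) None =
  flatten [seq [seq ((val j).+1, ctype s j) | j <- porbit_seq s i] | i <- hs].
Proof.
move=> ds; elim: hs m a => [|i hs IH] m a //= hs_ok am.
have [iC mi hs_ok'] := increasing_maxima_cons hs_ok.
rewrite letter_types_cat letter_types_block ?(leq_trans am mi) //; last first.
  rewrite (next_letter_blocks hs_ok'); case: hs {IH hs_ok} hs_ok' => //= j hs.
  by case/andP=> _ /andP[/andP[]].
by rewrite (IH _ _ hs_ok') // last_block.
Qed.

Lemma word_succ_blocks s m hs (a : nat) : increasing_maxima s m hs -> a <= m ->
  word_succ a (flatten [seq cycle_block s i | i <- hs]) None =
  flatten [seq [seq ((val j).+1, (val (s j)).+1) | j <- porbit_seq s i] | i <- hs].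
Proof.
elim: hs m a => [|i hs IH] m a //= hs_ok am.
have [iC mi hs_ok'] := increasing_maxima_cons hs_ok.
have ai : a <= (val i).+1 by rewrite leqW // (leq_trans am mi).
rewrite word_succ_cat word_succ_block // ?(IH _ _ hs_ok') ?foldl_maxn_block //.
rewrite (next_letter_blocks hs_ok'); case: hs {IH hs_ok} hs_ok' => //= j hs.
by case/andP=> _ /andP[/andP[_ /ltnW]]; rewrite ltnS.
Qed.

Lemma records_blocks s m hs (a : nat) : increasing_maxima s m hs -> a <= m ->
  records a (flatten [seq cycle_block s i | i <- hs]) = size hs.
Proof.
elim: hs m a => [|i hs IH] m a //= hs_ok am.
have [iC mi hs_ok'] := increasing_maxima_cons hs_ok.
rewrite records_cat records_block ?(leq_trans am mi) // foldl_maxn_block //.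
  by rewrite (IH _ _ hs_ok').
by rewrite leqW // (leq_trans am mi).
Qed.

Lemma increasing_cycle_maxima s : increasing_maxima s 0 (cycle_maxima s).
Proof. by rewrite /increasing_maxima cycle_maxima_sorted; apply/allP => i ->. Qed.

Lemma flatten_orbits_map s (T : Type) (f : 'I_n -> T) :
  flatten [seq [seq f j | j <- porbit_seq s i] | i <- cycle_maxima s] =
  [seq f j | j <- flatten [seq porbit_seq s i | i <- cycle_maxima s]].
Proof. by rewrite map_flatten -map_comp. Qed.

Lemma mem_orbits_map s (T : eqType) (f : 'I_n -> T) a :
  f a \in flatten [seq [seq f j | j <- porbit_seq s i] | i <- cycle_maxima s].
Proof.
by rewrite flatten_orbits_map map_f // (perm_mem (perm_eq_cycle_maxima_orbits s)) mem_enum.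
Qed.

Lemma assoc_word_succ s a :
  assoc 0 (word_succ 0 (iota_word s) None) (val a).+1 = (val (s a)).+1.
Proof.
apply: assoc_mem; first by rewrite word_succ_unzip1 iota_word_uniq.
rewrite iota_wordE (word_succ_blocks (increasing_cycle_maxima s)) //.
exact: (mem_orbits_map s (fun j => ((val j).+1, (val (s j)).+1))).
Qed.

Lemma iota_word_inj : injective (@iota_word n).
Proof.
move=> s1 s2 e; apply/permP => a; apply/val_inj/succn_inj.
by rewrite -!assoc_word_succ e.
Qed.

Lemma wtype_iota_word s a : derangement s -> wtype (iota_word s) (val a).+1 = ctype s a.
Proof.
move=> ds; apply: wtypeE; first exact: iota_word_uniq.
rewrite iota_wordE (letter_types_blocks ds (increasing_cycle_maxima s)) //.
exact: (mem_orbits_map s (fun j => ((val j).+1, ctype s j))).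
Qed.

Lemma cyc_iota_word s : cyc s = records 0 (iota_word s).
Proof.
rewrite iota_wordE (records_blocks (increasing_cycle_maxima s)) // /cyc.
have -> : porbits s = porbit s @: cycle_maxima s.
  apply/setP => X; apply/imsetP/imsetP => [[a _ ->]|[i _ ->]]; last by exists i.
  have [i iC ai] := cycle_maxima_cover s a; exists i => //.
  by apply/eqP; rewrite eq_porbit_mem.
rewrite card_in_imset; first exact/card_uniqP/cycle_maxima_uniq.
move=> i i' iC i'C e; apply: (cycle_maxima_inj iC i'C (porbit_id s i)).
by rewrite -e porbit_id.
Qed.

Lemma iota_word_has_larger_before s a : a \notin cycle_maxima s ->
  has (ltn (val a).+1) (take (index (val a).+1 (iota_word s)) (iota_word s)).
Proof.
move=> aC; have [i iC ai] := cycle_maxima_cover s a.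
have a_lt_i : a < i.
  by rewrite ltn_neqAle (cycle_maxima_le iC ai) andbT; apply: contraNneq aC => /val_inj ->.
set k := index i (cycle_maxima s).
have eC : cycle_maxima s = take k (cycle_maxima s) ++ i :: drop k.+1 (cycle_maxima s).
  by rewrite -{1}(cat_take_drop k (cycle_maxima s)) (drop_nth i) ?index_mem // nth_index.
have uw := iota_word_uniq s.
rewrite iota_wordE eC map_cat flatten_cat /= in uw *.
set P := flatten _ in uw *; set Q := flatten _ in uw *.
have [w bw _] := cycle_block_cons iC.
have aw : (val a).+1 \in cycle_block s i.
  by rewrite /cycle_block (mem_map succ_ord_inj) mem_porbit_seq.
have aP : (val a).+1 \notin P.
  move: uw; rewrite cat_uniq => /and3P[_ + _]; apply: contra => aP.
  by apply/hasP; exists (val a).+1; rewrite // mem_cat aw.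
rewrite index_cat (negbTE aP) take_cat ltnNge leq_addr /= addKn has_cat bw /= eqSS.
by rewrite eq_sym (ltn_eqF a_lt_i) /= ltnS a_lt_i orbT.
Qed.

Let letters := [seq (val j).+1 | j <- enum 'I_n].

Lemma perm_of_word u : perm_eq u letters ->
  {p : {perm 'I_n} | forall i : 'I_n, (val (p i)).+1 = nth 0 u i}.
Proof.
move=> uW; have su : size u = n by rewrite (perm_size uW) size_map size_enum_ord.
have uu : uniq u by rewrite (perm_uniq uW) (map_inj_uniq succ_ord_inj) enum_uniq.
have inu (i : 'I_n) : 0 < nth 0 u i <= n.
  have /mapP[j _ ->] : nth 0 u i \in letters by rewrite -(perm_mem uW) mem_nth // su.
  by rewrite ltn_ord.
pose f i : 'I_n := insubd i (nth 0 u i).-1.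
have fE i : (val (f i)).+1 = nth 0 u i.
  by have := inu i; rewrite /f val_insubd; case: (nth 0 u i) => //= k ->.
have f_inj : injective f.
  move=> i j e; apply/ord_inj/eqP.
  by rewrite -(nth_uniq 0 _ _ uu) ?su // -fE e fE.
by exists (perm f_inj) => i; rewrite permE fE.
Qed.

Lemma iota_word_surj u : perm_eq u letters -> exists s, iota_word s = u.
Proof.
pose enc s := sval (perm_of_word (iota_word_perm s)).
have encE s i : (val (enc s i)).+1 = nth 0 (iota_word s) i.
  exact: (svalP (perm_of_word (iota_word_perm s))).
have word_eq s v : perm_eq v letters ->
    (forall i : 'I_n, (val (enc s i)).+1 = nth 0 v i) -> iota_word s = v.
  move=> vW ev; apply: (@eq_from_nth _ 0) => [|i].
    by rewrite (perm_size vW) (perm_size (iota_word_perm s)).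
  rewrite (perm_size (iota_word_perm s)) size_map size_enum_ord => ilt.
  by rewrite -(encE s (Ordinal ilt)) ev.
have enc_inj : injective enc.
  move=> s1 s2 e; apply: iota_word_inj; apply: word_eq (iota_word_perm s2) _ => i.
  by rewrite e encE.
move=> uW; have [p pE] := perm_of_word uW; have [g _ gK] := injF_bij enc_inj.
by exists (g p); apply: word_eq => // i; rewrite gK pE.
Qed.

Lemma tau_c_word s x : iota_word (tau_c x s) = phi' (val x).+1 (iota_word s).
Proof.
rewrite /tau_c; case: pickP => [s' /eqP //|none].
have [s' e] : exists s', iota_word s' = phi' (val x).+1 (iota_word s).
  apply: iota_word_surj; apply: perm_trans (iota_word_perm s).
  exact: perm_eq_phi' (iota_word_uniq s) (mem_iota_word s x).
by have := none s'; rewrite e eqxx.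
Qed.

Lemma tau_c_cycle_max s x : derangement s -> x \in cycle_maxima s -> tau_c x s = s.
Proof.
move=> ds xC; apply: iota_word_inj; rewrite tau_c_word /phi'.
by rewrite is_peak_wtype ?iota_word_uniq ?mem_iota_word // wtype_iota_word // ctype_cycle_max.
Qed.

Section TauC.
Variables (s : {perm 'I_n}) (x : 'I_n).
Hypothesis ds : derangement s.

Let ur := iota_word_uniq s.
Let xr := mem_iota_word s x.

Lemma tau_cK : tau_c x (tau_c x s) = s.
Proof.
have [xC|/iota_word_has_larger_before hasX] := boolP (x \in cycle_maxima s).
  by rewrite !(tau_c_cycle_max ds xC).
by apply: iota_word_inj; rewrite !tau_c_word (phi'K ur xr hasX).
Qed.

Lemma cyc_tau_c : cyc (tau_c x s) = cyc s.
Proof.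
have [xC|/iota_word_has_larger_before hasX] := boolP (x \in cycle_maxima s).
  by rewrite tau_c_cycle_max.
by rewrite !cyc_iota_word tau_c_word (records_phi' ur xr hasX).
Qed.

Hypothesis dt : derangement (tau_c x s).

Lemma ctype_tau_c a : a != x -> ctype (tau_c x s) a = ctype s a.
Proof.
move=> ax; have [xC|/iota_word_has_larger_before hasX] := boolP (x \in cycle_maxima s).
  by rewrite tau_c_cycle_max.
by rewrite -!wtype_iota_word // tau_c_word (wtype_phi' ur xr hasX) ?mem_iota_word.
Qed.

Lemma ctype_tau_c_self : ctype (tau_c x s) x = flip_type (ctype s x).
Proof.
have [xC|/iota_word_has_larger_before hasX] := boolP (x \in cycle_maxima s).
  by rewrite tau_c_cycle_max // ctype_cycle_max.
by rewrite -!wtype_iota_word // tau_c_word (wtype_phi'_X ur xr hasX).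
Qed.

End TauC.

End IotaWord.

Lemma count_valleys_peaks a u : path (fun y z : nat => y != z) a u ->
  count (fun p => p.2 == (false, true)) (letter_types a u None) =
  count (fun p => p.2 == (true, false)) (letter_types a u None) +
  (if u is b :: _ then b < a else false).
Proof.
have lt_neq y z : y != z -> (z < y) = ~~ (y < z) by move=> yz; rewrite ltnNge leq_eqVlt (negbTE yz).
elim: u a => [|b u IH] a //= /andP[ab pu]; have {}IH := IH b pu.
case: u IH pu => [|c u] /= IH; first by rewrite (lt_neq _ _ ab); case: (a < b).
case/andP=> bc _; rewrite IH (lt_neq _ _ bc) (lt_neq _ _ ab).
by case: (a < b); case: (b < c); rewrite /= ?addn0 ?add0n; lia.
Qed.

Section CyclicTypes.
Variable n : nat.
Implicit Types (s : {perm 'I_n}) (a : 'I_n).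

Lemma card_ctype s c : derangement s ->
  #|[set a | ctype s a == c]| = count (fun p => p.2 == c) (letter_types 0 (iota_word s) None).
Proof.
move=> ds; rewrite iota_wordE (letter_types_blocks ds (increasing_cycle_maxima s)) //.
rewrite flatten_orbits_map count_map (seq.permP (perm_eq_cycle_maxima_orbits s)).
by rewrite cardsE cardE /enum_mem size_filter count_filter; apply: eq_count => a; rewrite /= andbT.
Qed.

Lemma card_valleys_peaks s : derangement s ->
  #|[set a | ctype s a == (false, true)]| = #|[set a | ctype s a == (true, false)]|.
Proof.
move=> ds; rewrite !card_ctype // count_valleys_peaks; last first.
  have := iota_word_uniq s; have : 0 \notin iota_word s.
    by rewrite iota_word_orbits; apply/mapP => -[].
  elim: (iota_word s) 0 => //= b u IH a; rewrite inE negb_or eq_sym => /andP[-> au] /andP[bu uu].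
  exact: IH.
by case: (iota_word s) => [|b u]; rewrite ?addn0.
Qed.

Lemma cpk_peaks s : derangement s -> cpk s = #|[set a | ctype s a == (true, false)]|.
Proof.
move=> ds; apply: eq_card => a; rewrite !inE /ctype xpair_eqE eqb_id eqbF_neg.
congr (_ && _); rewrite ltnNge leq_eqVlt.
by have := forallP ds a; rewrite -val_eqE eq_sym => /negbTE ->.
Qed.

End CyclicTypes.

(** * Grouping along the CMFS-action *)

Import GRing.Theory.
Local Open Scope ring_scope.

Definition exc_weight (R : comPzRingType) (t : R) (c : bool * bool) : R := if c.2 then t else 1.

Definition gamma_weight (R : comPzRingType) (t : R) (c : bool * bool) : R :=
  if c.1 == c.2 then 1 + t else exc_weight t c.

Section GammaGrouping.
Variables (R : comPzRingType) (T I : finType) (Pi : {set T}) (tau : I -> T -> T)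
  (ty : T -> I -> bool * bool) (G : T -> R) (t : R).
Hypotheses (tauP : forall x s, s \in Pi -> tau x s \in Pi)
  (tauK : forall x s, s \in Pi -> tau x (tau x s) = s)
  (G_tau : forall x s, s \in Pi -> G (tau x s) = G s)
  (ty_tau : forall x s a, s \in Pi -> a != x -> ty (tau x s) a = ty s a)
  (ty_tau_self : forall x s, s \in Pi -> ty (tau x s) x = flip_type (ty s x)).

Implicit Types (L : {set I}) (x a : I) (s : T).

Let no_dasc_on L s := [forall (a | a \in L), ty s a != (true, true)].

Let weight L s :=
  G s * \prod_a (if a \in L then gamma_weight t (ty s a) else exc_weight t (ty s a)).

(* Letters of L are already grouped: the sum runs over the representatives without a
   double ascent in L.  It does not depend on L, which interpolates between the two
   sides of [sum_exc_weight_gamma]. *)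
Let partial_sum L :=
  \sum_s (if (s \in Pi) && no_dasc_on L s then weight L s else 0).

Let no_dasc_onU L x s : no_dasc_on (x |: L) s = no_dasc_on L s && (ty s x != (true, true)).
Proof.
apply/forall_inP/andP => [h|[/forall_inP h hx] a].
  by split; [apply/forall_inP => a aL; apply: h; rewrite in_setU1 aL orbT | apply/h/setU11].
by rewrite in_setU1 => /orP[/eqP -> //|/h].
Qed.

Let no_dasc_on_tau L x s : x \notin L -> s \in Pi -> no_dasc_on L (tau x s) = no_dasc_on L s.
Proof.
move=> xL sP; apply: eq_forallb => a; case: (boolP (a \in L)) => //= aL.
by rewrite ty_tau //; apply: contraNneq xL => <-.
Qed.

Let weightU_double_descent L x s : x \notin L -> s \in Pi -> ty s x = (false, false) ->
  weight (x |: L) s = weight L s + weight L (tau x s).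
Proof.
move=> xL sP tx; rewrite /weight G_tau // -mulrDr; congr (_ * _).
rewrite (bigD1 x) // [in RHS](bigD1 x) // [X in _ + X](bigD1 x) //=.
rewrite ty_tau_self // tx setU11 (negbTE xL).
have -> : \prod_(a | a != x) (if a \in x |: L then gamma_weight t (ty s a)
     else exc_weight t (ty s a)) =
   \prod_(a | a != x) (if a \in L then gamma_weight t (ty s a) else exc_weight t (ty s a)).
  by apply: eq_bigr => a ax; rewrite in_setU1 (negbTE ax).
have -> : \prod_(a | a != x) (if a \in L then gamma_weight t (ty (tau x s) a)
     else exc_weight t (ty (tau x s) a)) =
   \prod_(a | a != x) (if a \in L then gamma_weight t (ty s a) else exc_weight t (ty s a)).
  by apply: eq_bigr => a ax; rewrite ty_tau.
by rewrite -mulrDl.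
Qed.

Let weightU_single L x s : ty s x != (true, true) -> ty s x != (false, false) ->
  weight (x |: L) s = weight L s.
Proof.
move=> ndasc nddes; rewrite /weight; congr (_ * _); apply: eq_bigr => a _.
rewrite in_setU1; case: (eqVneq a x) => [->|] //=; case: (x \in L) => //.
by rewrite /gamma_weight; case: (ty s x) ndasc nddes => [[] []].
Qed.

Let sig x s := if s \in Pi then tau x s else s.

Let sigK x : involutive (sig x).
Proof.
by move=> s; rewrite /sig; case: (boolP (s \in Pi)) => sP; rewrite ?(negbTE sP) ?tauP ?tauK.
Qed.

Let sum_double_ascent L x : x \notin L ->
  \sum_s (if [&& s \in Pi, no_dasc_on L s & ty s x == (true, true)] then weight L s else 0) =
  \sum_s (if [&& s \in Pi, no_dasc_on L s & ty s x == (false, false)]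
          then weight L (tau x s) else 0).
Proof.
move=> xL; rewrite (reindex_inj (inv_inj (sigK x))); apply: eq_bigr => s _.
rewrite /sig; case: (boolP (s \in Pi)) => sP; last by rewrite (negbTE sP).
rewrite tauP // no_dasc_on_tau // ty_tau_self //.
by case: (ty s x) => [[] []].
Qed.

Let partial_sumU L x : x \notin L -> partial_sum (x |: L) = partial_sum L.
Proof.
move=> xL; rewrite /partial_sum.
have splitL s : (if (s \in Pi) && no_dasc_on L s then weight L s else 0) =
   (if [&& s \in Pi, no_dasc_on L s & ty s x != (true, true)] then weight L s else 0) +
   (if [&& s \in Pi, no_dasc_on L s & ty s x == (true, true)] then weight L s else 0).
  by case: (s \in Pi) (no_dasc_on L s) (ty s x == _) => [] [] []; rewrite ?addr0 ?add0r.
have splitU s : (if (s \in Pi) && no_dasc_on (x |: L) s then weight (x |: L) s else 0) =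
   (if [&& s \in Pi, no_dasc_on L s & ty s x != (true, true)] then weight L s else 0) +
   (if [&& s \in Pi, no_dasc_on L s & ty s x == (false, false)]
    then weight L (tau x s) else 0).
  rewrite no_dasc_onU; case: (boolP (s \in Pi)) => sP /=; last by rewrite addr0.
  case: (no_dasc_on L s) => /=; last by rewrite addr0.
  case: (eqVneq (ty s x) (true, true)) => [-> //|ndasc]; first by rewrite add0r.
  case: (eqVneq (ty s x) (false, false)) => [tx|nddes].
    by rewrite weightU_double_descent.
  by rewrite addr0 weightU_single.
rewrite (eq_bigr _ (fun s _ => splitU s)) (eq_bigr _ (fun s _ => splitL s)) !big_split /=.
by rewrite sum_double_ascent.
Qed.

Lemma sum_exc_weight_gamma :
  \sum_(s in Pi) G s * \prod_a exc_weight t (ty s a) =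
  \sum_(s in Pi | [forall a, ty s a != (true, true)]) G s * \prod_a gamma_weight t (ty s a).
Proof.
have -> : \sum_(s in Pi) G s * \prod_a exc_weight t (ty s a) = partial_sum set0.
  rewrite big_mkcond; apply: eq_bigr => s _.
  have -> : no_dasc_on set0 s by apply/forall_inP => a; rewrite in_set0.
  by rewrite andbT /weight; under [in RHS]eq_bigr => a _ do rewrite in_set0.
have -> : \sum_(s in Pi | [forall a, ty s a != (true, true)])
    G s * \prod_a gamma_weight t (ty s a) = partial_sum setT.
  rewrite big_mkcond; apply: eq_bigr => s _; congr (if _ && _ then _ else _).
    by apply: eq_forallb => a; rewrite in_setT.
  by rewrite /weight; under [in RHS]eq_bigr => a _ do rewrite in_setT.
have grow k L : #|L| = k -> partial_sum L = partial_sum set0.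
  elim: k L => [|k IH] L; first by move/eqP; rewrite cards_eq0 => /eqP ->.
  move=> cardL; have [x xL] : exists x, x \in L.
    by apply/set0Pn; rewrite -card_gt0 cardL.
  rewrite -(setD1K xL) partial_sumU ?setD11 // IH //.
  by move: cardL; rewrite (cardsD1 x L) xL add1n => -[].
by rewrite (grow _ _ erefl).
Qed.

End GammaGrouping.

Lemma prod_if_card (R : comPzRingType) (T : finType) (P : pred T) (c : R) :
  \prod_(a : T) (if P a then c else 1) = c ^+ #|[set a | P a]|.
Proof. by rewrite -big_mkcond /= -prodr_const; apply: eq_bigl => a; rewrite inE. Qed.

Lemma prod_by_type (R : comPzRingType) (T : finType) (ty : T -> bool * bool)
    (g : bool * bool -> R) :
  \prod_a g (ty a) =
  g (true, true) ^+ #|[set a | ty a == (true, true)]| *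
  g (true, false) ^+ #|[set a | ty a == (true, false)]| *
  (g (false, true) ^+ #|[set a | ty a == (false, true)]| *
   g (false, false) ^+ #|[set a | ty a == (false, false)]|).
Proof.
rewrite (partition_big ty predT) //=.
have inner c : \prod_(a | true && (ty a == c)) g (ty a) = g c ^+ #|[set a | ty a == c]|.
  by rewrite -prod_if_card big_mkcond; apply: eq_bigr => a _; case: eqP => // ->.
rewrite (eq_bigr _ (fun c _ => inner c)).
have -> : \prod_(c | predT c) g c ^+ #|[set a | ty a == c]| =
    \prod_(b1 : bool) \prod_(b2 : bool) g (b1, b2) ^+ #|[set a | ty a == (b1, b2)]|.
  by rewrite pair_bigA; apply: eq_bigr => -[b1 b2].
by rewrite !big_bool.
Qed.

Lemma exc_prod (R : comPzRingType) n (s : {perm 'I_n}) (t : R) :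
  t ^+ exc s = \prod_a exc_weight t (ctype s a).
Proof. by rewrite /exc -prod_if_card; apply: eq_bigr => a _. Qed.

Lemma tau_c_CMFS n (Pi : {set {perm 'I_n}}) x s :
  CMFS_invariant Pi -> s \in Pi -> tau_c x s \in Pi.
Proof. by move=> inv sP; have := inv [set x] s sP; rewrite /tau_cS enum_set1. Qed.

Lemma cpk_tau_c n (s : {perm 'I_n}) x :
  derangement s -> derangement (tau_c x s) -> cpk (tau_c x s) = cpk s.
Proof.
move=> ds dt; rewrite !cpk_peaks //; apply: eq_card => a; rewrite !inE.
have [->|ax] := eqVneq a x; last by rewrite ctype_tau_c.
by rewrite ctype_tau_c_self //; case: (ctype s x) => [[] []].
Qed.

Lemma sum_exc_gamma (R : comPzRingType) n (Pi : {set {perm 'I_n}})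
    (G : {perm 'I_n} -> R) (t : R) :
  (forall s, s \in Pi -> derangement s) -> CMFS_invariant Pi ->
  (forall x s, s \in Pi -> G (tau_c x s) = G s) ->
  \sum_(s in Pi) G s * t ^+ exc s =
  \sum_(s in Pi | [forall a, ctype s a != (true, true)]) G s * \prod_a gamma_weight t (ctype s a).
Proof.
move=> der inv G_tau; under eq_bigr => s _ do rewrite exc_prod.
have derT x s : s \in Pi -> derangement (tau_c x s) by move/(tau_c_CMFS x inv)/der.
apply: (sum_exc_weight_gamma (tau := @tau_c n)) => // [x s sP|x s sP|x s a sP|x s sP].
- exact: tau_c_CMFS.
- exact: tau_cK (der s sP).
- by apply: ctype_tau_c; [apply: der | apply: derT].
- by apply: ctype_tau_c_self; [apply: der | apply: derT].
Qed.

Lemma prod_gamma_weight_subst (R : comPzRingType) n (s : {perm 'I_n}) (t q Y Z : R) :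
  derangement s -> [forall a, ctype s a != (true, true)] ->
  t = q * Y * (q * Z) -> 1 + t = q * (1 + Z) ->
  \prod_a gamma_weight t (ctype s a) = q ^+ n * Y ^+ cpk s * \prod_a gamma_weight Z (ctype s a).
Proof.
move=> ds nd tE tE1.
have qn := prod_by_type (ctype s) (fun _ => q); rewrite /= prodr_const card_ord in qn.
rewrite qn !prod_by_type /gamma_weight /exc_weight /= cpk_peaks // -(card_valleys_peaks ds).
have -> : #|[set a | ctype s a == (true, true)]| = 0%N.
  by apply/eqP; rewrite cards_eq0; apply/eqP/setP => a; rewrite !inE; apply/negbTE/(forallP nd).
rewrite tE1 tE !expr0 !expr1n !exprMn.
ring.
Qed.

Theorem theorem4p2 (R : fieldType) (n : nat) (Pi : {set {perm 'I_n}})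
  (w x t : R) :
  (0 < n)%N ->
  (forall s, s \in Pi -> derangement s) ->
  CMFS_invariant Pi ->
  1 + x != 0 -> x + t != 0 -> 1 + x * t != 0 ->
  \sum_(s in Pi) w ^+ cyc s * t ^+ exc s =
  ((1 + x * t) / (1 + x)) ^+ n *
  \sum_(s in Pi) w ^+ cyc s
      * ((1 + x) ^+ 2 * t / ((x + t) * (1 + x * t))) ^+ cpk s
      * ((x + t) / (1 + x * t)) ^+ exc s.
Proof.
move=> _ der inv x1 xt xt1.
set q := (1 + x * t) / (1 + x).
set Y := (1 + x) ^+ 2 * t / ((x + t) * (1 + x * t)).
set Z := (x + t) / (1 + x * t).
have tE : t = q * Y * (q * Z) by rewrite /q /Y /Z; field; rewrite x1 xt xt1.
have tE1 : 1 + t = q * (1 + Z) by rewrite /q /Z; field; rewrite x1 xt1.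
have cyc_inv y s : s \in Pi -> cyc (tau_c y s) = cyc s by move/der/cyc_tau_c.
have cpk_inv y s : s \in Pi -> cpk (tau_c y s) = cpk s.
  by move=> sP; apply: cpk_tau_c (der s sP) (der _ (tau_c_CMFS y inv sP)).
rewrite (sum_exc_gamma (G := fun s => w ^+ cyc s)) //; last first.
  by move=> y s sP; rewrite cyc_inv.
rewrite (sum_exc_gamma (G := fun s => w ^+ cyc s * Y ^+ cpk s)) //; last first.
  by move=> y s sP; rewrite cyc_inv ?cpk_inv.
rewrite mulr_sumr; apply: eq_bigr => s /andP[sP nd].
by rewrite (prod_gamma_weight_subst (der s sP) nd tE tE1) !mulrA [w ^+ _ * _]mulrC.
Qed.
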